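(* Let $\mathcal C,\mathcal D$ be connected $\Delta$-complexes labeled over a common $B(X,P)$, let $f\colon\mathcal C\to\mathcal D$ be an immersion commuting with the labelings, and let $v$ be any $0$-cell of $\mathcal C$. Then $f$ is a covering map if and only if $L(\mathcal C,v)$ is a full closed inverse submonoid of $L(\mathcal D,f(v))$, that is, $L(\mathcal C,v)$ contains every idempotent of $L(\mathcal D,f(v))$.
   Context: A $\Delta$-complex is a CW-complex in which each $k$-cell $c$ has a distinguished characteristic map $\sigma_c\colon\Delta^k=[v_0,\dots,v_k]\to\mathcal C$ whose restriction to each $(k-1)$-face (identified order-preservingly with $\Delta^{k-1}$) is the distinguished characteristic map of a $(k-1)$-cell; root of $c$ is $\sigma_c(v_0)$; a $1$-cell $e$ is directed from $\sigma_e(v_0)$ to $\sigma_e(v_1)$. Complexes are finite-dimensional. An immersion is a continuous map that is a local homeomorphism onto its image and commutes with characteristic maps (each $k$-cell $d$ maps onto a $k$-cell with $f\circ\sigma_d=\sigma_{f(d)}$). $B(X,P)$ is a $\Delta$-complex with one $0$-cell, $1$-cells indexed by $X$, $k$-cells ($2\le k\le n$) indexed by $P_k$, index sets pairwise disjoint, $P=\bigcup P_k$. A complex $\mathcal C$ is labeled over $B(X,P)$ via an immersion $f_{\mathcal C}\colon\mathcal C\to B(X,P)$; $\ell(c)$ is the index of $f_{\mathcal C}(c)$; $f\colon\mathcal C\to\mathcal D$ commutes with labelings if $f_{\mathcal D}\circ f=f_{\mathcal C}$. Boundary labels: for a $k$-cell $c$ ($k\ge2$) with characteristic map $\sigma$,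 $c_i$ is the $(k-1)$-cell with characteristic map $\sigma$ restricted to the face omitting $v_i$, $e(c)=\sigma([v_0,v_1])$; $bl(c)=\ell(\sigma[v_0,v_1])\ell(\sigma[v_1,v_2])\ell(\sigma[v_0,v_2])^{-1}$ if $k=2$, $bl(c)=\ell(c_k)\cdots\ell(c_1)\ell(e(c))\ell(c_0)\ell(e(c))^{-1}$ if $k\ge3$; $bl(\rho)$ is that of the cell of $B(X,P)$ labeled $\rho$. $M(X,P)$ is the inverse monoid presented by generators $X\cup P$ and relations $\rho^2=\rho$, $\rho=\rho\,bl(\rho)$ for $\rho\in P$. $M(X,P)$ acts on the right by partial injections on the $0$-cells of a labeled complex: $v\cdot x=w$ iff there is a $1$-cell labeled $x\in X$ from $v$ to $w$, $v\cdot x^{-1}=w$ iff there is one from $w$ to $v$, $v\cdot\rho=v$ iff $v$ is the root of a cell labeled $\rho\in P$ (undefined otherwise); this extends to a well-defined action of $M(X,P)$. The loop monoid is $L(\mathcal C,v)=\{m\in M(X,P): v\cdot m=v\}$. Closed: $N=N^\omega$ where $N^\omega=\{m: m\ge n\text{ for some } n\in N\}$ in the natural partial order ($a\le b$ iff $a=eb$, $e$ idempotent). *)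

From Stdlib Require Import List Arith Relations.
Import ListNotations.

(** A Delta-complex, given combinatorially: [cell k] is the type of k-cells,
    [face k i c] (for a (k+1)-cell c, 0 <= i <= k+1) is the k-cell whose
    characteristic map is that of c restricted to the face omitting v_i.
    Compatibility of restrictions = the simplicial identities. *)
Record DeltaComplex := {
  cell : nat -> Type;
  face : forall k, nat -> cell (S k) -> cell k;
  face_face : forall k (c : cell (S (S k))) i j, i < j -> j <= S (S k) ->
     face k i (face (S k) j c) = face k (pred j) (face (S k) i c)
}.

Definition finite_dim (C : DeltaComplex) : Prop :=
  exists n, forall k, n < k -> cell C k -> False.

(** [vertex i c] = sigma_c(v_i), the i-th vertex (0-cell) of the k-cell c. *)
Fixpoint vertex (C : DeltaComplex) (k : nat) {struct k} : nat -> cell C k -> cell C 0 :=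
  match k return nat -> cell C k -> cell C 0 with
  | 0 => fun _ c => c
  | S k' => fun i c =>
      if i <=? k' then vertex C k' i (face C k' (S k') c)
      else vertex C k' k' (face C k' 0 c)
  end.

Definition root (C : DeltaComplex) (k : nat) (c : cell C k) : cell C 0 := vertex C k 0 c.

(** e(c) = sigma_c([v_0,v_1]) for a (k+1)-cell c *)
Fixpoint edge01 (C : DeltaComplex) (k : nat) {struct k} : cell C (S k) -> cell C 1 :=
  match k return cell C (S k) -> cell C 1 with
  | 0 => fun c => c
  | S k' => fun c => edge01 C k' (face C (S k') (S (S k')) c)
  end.

Definition adj (C : DeltaComplex) (u w : cell C 0) : Prop :=
  exists e : cell C 1, vertex C 1 0 e = u /\ vertex C 1 1 e = w.

Definition connected (C : DeltaComplex) : Prop :=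
  forall u w : cell C 0, clos_refl_sym_trans (cell C 0) (adj C) u w.

Definition cmap (C D : DeltaComplex) := forall k, cell C k -> cell D k.

Definition commutes_faces (C D : DeltaComplex) (f : cmap C D) : Prop :=
  forall k i (c : cell C (S k)), i <= S k ->
    f k (face C k i c) = face D k i (f (S k) c).

(** local injectivity: distinct corners (c,i) at a common 0-cell have distinct images *)
Definition locally_injective (C D : DeltaComplex) (f : cmap C D) : Prop :=
  forall k i (c c' : cell C k), i <= k ->
    vertex C k i c = vertex C k i c' -> f k c = f k c' -> c = c'.

Definition immersion (C D : DeltaComplex) (f : cmap C D) : Prop :=
  commutes_faces C D f /\ locally_injective C D f.

Definition star_surjective (C D : DeltaComplex) (f : cmap C D) : Prop :=
  forall k i (v : cell C 0) (d : cell D k), i <= k ->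
    vertex D k i d = f 0 v -> exists c : cell C k, vertex C k i c = v /\ f k c = d.

(** covering map: surjective, and bijective on the star of every 0-cell *)
Definition covering (C D : DeltaComplex) (f : cmap C D) : Prop :=
  immersion C D f /\ star_surjective C D f /\ (forall w : cell D 0, exists v, f 0 v = w).

(** B(X,P): a Delta-complex with exactly one 0-cell (X = 1-cells, P_k = k-cells) *)
Definition single_vertex (B : DeltaComplex) : Prop :=
  exists b : cell B 0, forall b' : cell B 0, b' = b.

(** generators X u P of M(X,P): cells of B of positive dimension (k+1) *)
Definition Gen (B : DeltaComplex) := {k : nat & cell B (S k)}.
Definition gen (B : DeltaComplex) (k : nat) (c : cell B (S k)) : Gen B :=
  existT (fun k => cell B (S k)) k c.
(** letters: (generator, is_inverse) *)
Definition Letter (B : DeltaComplex) := (Gen B * bool)%type.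

Definition linv (B : DeltaComplex) (w : list (Letter B)) : list (Letter B) :=
  rev (map (fun a => (fst a, negb (snd a))) w).

Definition bl (B : DeltaComplex) (k : nat) : cell B (S (S k)) -> list (Letter B) :=
  match k return cell B (S (S k)) -> list (Letter B) with
  | 0 => fun r =>
      [(gen B 0 (face B 1 2 r), false); (gen B 0 (face B 1 0 r), false);
       (gen B 0 (face B 1 1 r), true)]
  | S k' => fun r =>
      map (fun i => (gen B (S k') (face B (S (S k')) i r), false))
          (rev (seq 1 (S (S (S k')))))
      ++ [(gen B 0 (edge01 B (S (S k')) r), false);
          (gen B (S k') (face B (S (S k')) 0 r), false);
          (gen B 0 (edge01 B (S (S k')) r), true)]
  end.

(** The congruence presenting the inverse monoid M(X,P) = Inv< X u P | rho^2 = rho,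
    rho = rho bl(rho) > on words over letters and formal inverses
    (Vagner congruence + defining relations). *)
Inductive wcong (B : DeltaComplex) : list (Letter B) -> list (Letter B) -> Prop :=
| wc_refl w : wcong B w w
| wc_sym w z : wcong B w z -> wcong B z w
| wc_trans w z t : wcong B w z -> wcong B z t -> wcong B w t
| wc_ctx u w1 w2 z : wcong B w1 w2 -> wcong B (u ++ w1 ++ z) (u ++ w2 ++ z)
| wc_vag1 w : wcong B (w ++ linv B w ++ w) w
| wc_vag2 w z : wcong B (w ++ linv B w ++ z ++ linv B z) (z ++ linv B z ++ w ++ linv B w)
| wc_idem k (r : cell B (S (S k))) :
    wcong B [(gen B (S k) r, false); (gen B (S k) r, false)] [(gen B (S k) r, false)]
| wc_bl k (r : cell B (S (S k))) :
    wcong B [(gen B (S k) r, false)] ((gen B (S k) r, false) :: bl B k r).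

(** idempotents and natural partial order of M(X,P), on representatives *)
Definition idem (B : DeltaComplex) (w : list (Letter B)) : Prop := wcong B (w ++ w) w.
Definition mleq (B : DeltaComplex) (a b : list (Letter B)) : Prop :=
  exists e, idem B e /\ wcong B a (e ++ b).

(** right action of a letter on 0-cells of a complex labeled by lC *)
Definition step (C B : DeltaComplex) (lC : cmap C B) (v : cell C 0) (a : Letter B)
  (u : cell C 0) : Prop :=
  match a with
  | (existT _ k c0, b) =>
    (match k as k0 return cell B (S k0) -> Prop with
     | 0 => fun x => exists e : cell C 1, lC 1 e = x /\
              (if b then vertex C 1 0 e = u /\ vertex C 1 1 e = v
                    else vertex C 1 0 e = v /\ vertex C 1 1 e = u)
     | S k' => fun r => u = v /\
              exists c : cell C (S (S k')), lC (S (S k')) c = r /\ root C (S (S k')) c = v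
     end) c0
  end.

Fixpoint act (C B : DeltaComplex) (lC : cmap C B) (v : cell C 0) (w : list (Letter B))
  (u : cell C 0) : Prop :=
  match w with
  | [] => u = v
  | a :: w' => exists t, step C B lC v a t /\ act C B lC t w' u
  end.

Definition loopset (C B : DeltaComplex) (lC : cmap C B) (v : cell C 0)
  : list (Letter B) -> Prop := fun w => act C B lC v w v.

Definition full_closed_inverse_submonoid (B : DeltaComplex)
  (N M' : list (Letter B) -> Prop) : Prop :=
  (forall w, N w -> M' w) /\
  N [] /\
  (forall w z, N w -> N z -> N (w ++ z)) /\
  (forall w, N w -> N (linv B w)) /\
  (forall m n, N n -> mleq B n m -> N m) /\
  (forall e, idem B e -> M' e -> N e).

(* The right action of M(X,P) on the 0-cells of a labeled complex is by partial
   injections, because the labeling is an immersion, and it respects the defining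
   relations, because the boundary word bl(rho) of a cell labeled rho is a loop at its
   root; hence idempotents act as partial identities.  If f is a covering, paths lift
   along f, so an idempotent loop at f(v) lifts to a path from v that is a loop.
   Conversely, fullness makes every word readable from f(t) readable from t; reading
   the letter of a corner of D at f(t) then yields a cell of C at t, which is a lift of
   the corner by local injectivity of the labeling of D.  Connectedness of D then makes
   f surjective. *)

From Stdlib Require Import List Arith Relations Lia.
Import ListNotations.

Arguments face {_ k} _ _.
Arguments vertex {C k} i c.
Arguments root {C k} c.
Arguments edge01 {C k} c.
Arguments gen {B k} c.
Arguments linv {B} w.
Arguments bl {B k} r.
Arguments step {C B} lC v a u.
Arguments act {C B} lC v w u.
Arguments idem {B} w.

Ltac decide_leb :=
  repeat match goal with
  | |- context [?a <? ?b] => destruct (Nat.ltb_spec a b); try lia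
  | |- context [?a <=? ?b] => destruct (Nat.leb_spec a b); try lia
  end; try reflexivity.

Definition coface (m j : nat) : nat := if j <? m then j else S j.

Section Faces.

Variable C : DeltaComplex.

Lemma vertex_succ k i (c : cell C (S k)) :
  vertex i c = if i <=? k then vertex i (face (S k) c) else vertex k (face 0 c).
Proof. reflexivity. Qed.

Lemma face_comm k (c : cell C (S (S k))) i j : i <= j -> j <= S k ->
  face i (face (S j) c) = face j (face i c).
Proof. intros; apply face_face; lia. Qed.

Lemma vertex_face : forall k (c : cell C (S k)) m j, m <= S k -> j <= k ->
  vertex j (face m c) = vertex (coface m j) c.
Proof.
  unfold coface; induction k as [|k IH]; intros c m j Hm Hj.
  - destruct j, m as [|[|m]]; try lia; reflexivity.
  - rewrite (vertex_succ k j (face m c)).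
    destruct (Nat.eq_dec m (S (S k))) as [->|Hm'].
    + rewrite (vertex_succ (S k)); decide_leb; rewrite (vertex_succ k); decide_leb.
    + destruct (Nat.leb_spec j k).
      * rewrite <- (face_comm _ c m (S k)) by lia.
        rewrite IH by lia; rewrite (vertex_succ (S k)); decide_leb.
      * assert (j = S k) as -> by lia.
        destruct m as [|m].
        -- rewrite (vertex_succ (S k)), (vertex_succ k (S k) (face 0 c)); decide_leb.
        -- rewrite face_comm by lia.
           rewrite IH by lia; rewrite (vertex_succ (S k)); decide_leb.
Qed.

Lemma vertex_edge01 : forall k (c : cell C (S k)) j, j <= 1 ->
  vertex j (edge01 c) = vertex j c.
Proof.
  induction k as [|k IH]; intros c j Hj; [reflexivity|].
  cbn [edge01]; rewrite IH, vertex_face by lia; unfold coface; decide_leb.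
Qed.

(* The edge [v_0 v_i] of a cell; for [i = 0] this is [edge01]. *)
Fixpoint edge0 (k i : nat) : cell C (S k) -> cell C 1 :=
  match k return cell C (S k) -> cell C 1 with
  | 0 => fun c => c
  | S k' => fun c => if i <=? S k' then edge0 k' i (face (S (S k')) c)
                    else edge0 k' (S k') (face 1 c)
  end.

Lemma vertex0_edge0 : forall k i (c : cell C (S k)), vertex 0 (edge0 k i c) = vertex 0 c.
Proof.
  induction k as [|k IH]; intros i c; [reflexivity|].
  cbn [edge0]; destruct (i <=? S k); rewrite IH, vertex_face by lia; reflexivity.
Qed.

Lemma vertex1_edge0 : forall k i (c : cell C (S k)), 1 <= i <= S k ->
  vertex 1 (edge0 k i c) = vertex i c.
Proof.
  induction k as [|k IH]; intros i c Hi.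
  - replace i with 1 by lia; reflexivity.
  - cbn [edge0]; decide_leb; rewrite IH, vertex_face by lia; unfold coface; decide_leb.
    f_equal; lia.
Qed.

End Faces.

Section CellularMaps.

Variables (C D : DeltaComplex) (F : cmap C D).
Hypothesis F_faces : commutes_faces C D F.

Lemma vertex_map : forall k i (c : cell C k), F 0 (vertex i c) = vertex i (F k c).
Proof.
  induction k as [|k IH]; intros i c; [reflexivity|].
  rewrite !vertex_succ; destruct (i <=? k); rewrite IH, F_faces by lia; reflexivity.
Qed.

Lemma edge01_map : forall k (c : cell C (S k)), F 1 (edge01 c) = edge01 (F (S k) c).
Proof.
  induction k as [|k IH]; intros c; [reflexivity|].
  cbn [edge01]; rewrite IH, F_faces by lia; reflexivity.
Qed.

Lemma edge0_map : forall k i (c : cell C (S k)), F 1 (edge0 C k i c) = edge0 D k i (F (S k) c).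
Proof.
  induction k as [|k IH]; intros i c; [reflexivity|].
  cbn [edge0]; destruct (i <=? S k); rewrite IH, F_faces by lia; reflexivity.
Qed.

End CellularMaps.

Section Action.

Variables (C B : DeltaComplex) (lC : cmap C B).

Lemma step_edge_iff t (x : cell B 1) b u :
  step lC t (gen x, b) u <-> exists e : cell C 1, lC 1 e = x /\
    if b then vertex 0 e = u /\ vertex 1 e = t else vertex 0 e = t /\ vertex 1 e = u.
Proof. reflexivity. Qed.

Lemma step_cell_iff k t (x : cell B (S (S k))) b u :
  step lC t (gen x, b) u <-> u = t /\ exists c : cell C (S (S k)), lC _ c = x /\ root c = t.
Proof. reflexivity. Qed.

Lemma step_forward (e : cell C 1) : step lC (vertex 0 e) (gen (lC 1 e), false) (vertex 1 e).
Proof. exists e; auto. Qed.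

Lemma step_backward (e : cell C 1) : step lC (vertex 1 e) (gen (lC 1 e), true) (vertex 0 e).
Proof. exists e; auto. Qed.

Lemma step_root k (c : cell C (S (S k))) : step lC (root c) (gen (lC _ c), false) (root c).
Proof. split; [reflexivity | exists c; auto]. Qed.

Lemma step_inverse t g b u : step lC t (g, b) u -> step lC u (g, negb b) t.
Proof.
  destruct g as [[|k] x]; intros H.
  - apply step_edge_iff in H as [e [He Hb]].
    exists e; split; [exact He | destruct b; simpl; tauto].
  - apply step_cell_iff in H as [-> H]; split; auto.
Qed.

Lemma act_app : forall w z t u, act lC t (w ++ z) u <-> exists m, act lC t w m /\ act lC m z u.
Proof.
  induction w as [|a w IH]; intros z t u; simpl.
  - split; [eauto | intros [m [-> H]]; exact H].
  - split.
    + intros [s [Hs [m [H1 H2]]%IH]]; eauto.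
    + intros [m [[s [Hs H1]] H2]]. exists s; split; [exact Hs | apply IH; eauto].
Qed.

Lemma act_linv : forall w t u, act lC t w u -> act lC u (linv w) t.
Proof.
  induction w as [|[g b] w IH]; intros t u H; simpl in H.
  - subst; reflexivity.
  - destruct H as [s [Hs H]]. unfold linv; simpl; fold (linv w).
    apply act_app; exists s; split; [auto|].
    exists t; split; [apply step_inverse; exact Hs | reflexivity].
Qed.

Lemma connected_act : connected C -> forall x y, exists w, act lC x w y.
Proof.
  intros conn x y;
    induction (conn x y) as [x y [e [<- <-]]| x | x y _ [w H] | x y z _ [w H] _ [w' H']].
  - exists [(gen (lC 1 e), false)]; exists (vertex 1 e); split; [apply step_forward | reflexivity].
  - exists []; reflexivity.
  - exists (linv w); apply act_linv; exact H.
  - exists (w ++ w'); apply act_app; eauto.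
Qed.

Lemma step_letter_exists k (c : cell C (S k)) :
  exists s, step lC (vertex 0 c) (gen (lC _ c), false) s.
Proof.
  destruct k as [|k]; [exists (vertex 1 c); apply step_forward |].
  exists (root c); apply step_root.
Qed.

Lemma step_letter_cell k (x : cell B (S k)) t s :
  step lC t (gen x, false) s -> exists c : cell C (S k), lC _ c = x /\ vertex 0 c = t.
Proof.
  destruct k as [|k].
  - intros [e [He [H0 _]]]%step_edge_iff; eauto.
  - intros [_ Hc]%step_cell_iff; exact Hc.
Qed.

Section LocallyInjective.

Hypothesis lC_inj : locally_injective C B lC.

Lemma step_functional t a u u' : step lC t a u -> step lC t a u' -> u = u'.
Proof.
  destruct a as [[[|k] x] b].
  - intros [e [He Hb]]%step_edge_iff [e' [He' Hb']]%step_edge_iff.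
    destruct b; destruct Hb, Hb'.
    + assert (e = e') as <- by (apply (lC_inj 1 1); [lia | congruence | congruence]). congruence.
    + assert (e = e') as <- by (apply (lC_inj 1 0); [lia | congruence | congruence]). congruence.
  - intros [-> _]%step_cell_iff [-> _]%step_cell_iff; reflexivity.
Qed.

Lemma step_injective t t' a u : step lC t a u -> step lC t' a u -> t = t'.
Proof.
  destruct a as [g b]; intros H H'.
  exact (step_functional _ _ _ _ (step_inverse _ _ _ _ H) (step_inverse _ _ _ _ H')).
Qed.

Lemma act_functional : forall w t u u', act lC t w u -> act lC t w u' -> u = u'.
Proof.
  induction w as [|a w IH]; intros t u u' H H'; simpl in H, H'.
  - congruence.
  - destruct H as [s [Hs H]], H' as [s' [Hs' H']].
    pose proof (step_functional _ _ _ _ Hs Hs'); subst; eauto.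
Qed.

Lemma act_injective : forall w t t' u, act lC t w u -> act lC t' w u -> t = t'.
Proof.
  induction w as [|a w IH]; intros t t' u H H'; simpl in H, H'.
  - congruence.
  - destruct H as [s [Hs H]], H' as [s' [Hs' H']].
    pose proof (IH _ _ _ H H'); subst; eapply step_injective; eauto.
Qed.

Lemma act_w_linv w t u :
  act lC t (w ++ linv w) u <-> u = t /\ exists m, act lC t w m.
Proof.
  rewrite act_app; split.
  - intros [m [H1 H2]]; split; [|eauto].
    eapply act_functional; [exact H2 | apply act_linv; exact H1].
  - intros [-> [m H]]; exists m; split; [exact H | apply act_linv; exact H].
Qed.

End LocallyInjective.

Section CommutingFaces.

Hypothesis lC_faces : commutes_faces C B lC.

Lemma act_root_faces k (c : cell C (S (S (S k)))) l :
  (forall i, In i l -> 1 <= i <= S (S (S k))) ->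
  act lC (root c) (map (fun i => (gen (face i (lC _ c)), false)) l) (root c).
Proof.
  induction l as [|i l IH]; intros Hl; [reflexivity|].
  exists (root c); split; [|apply IH; intros; apply Hl; simpl; auto].
  assert (Hi : 1 <= i <= S (S (S k))) by (apply Hl; simpl; auto).
  rewrite <- lC_faces by lia.
  replace (root c) with (root (face i c))
    by (unfold root; rewrite vertex_face by lia; unfold coface; decide_leb).
  apply step_root.
Qed.

Lemma act_boundary k (c : cell C (S (S k))) : act lC (root c) (bl (lC _ c)) (root c).
Proof.
  destruct k as [|k].
  - cbn [bl]; rewrite <- !lC_faces by lia.
    exists (vertex 1 c); split.
    { replace (root c) with (vertex 0 (face 2 c)) by (rewrite vertex_face by lia; reflexivity).
      replace (vertex 1 c) with (vertex 1 (face 2 c)) by (rewrite vertex_face by lia; reflexivity).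
      apply step_forward. }
    exists (vertex 2 c); split.
    { replace (vertex 1 c) with (vertex 0 (face 0 c)) by (rewrite vertex_face by lia; reflexivity).
      replace (vertex 2 c) with (vertex 1 (face 0 c)) by (rewrite vertex_face by lia; reflexivity).
      apply step_forward. }
    exists (root c); split; [|reflexivity].
    replace (root c) with (vertex 0 (face 1 c)) by (rewrite vertex_face by lia; reflexivity).
    replace (vertex 2 c) with (vertex 1 (face 1 c)) by (rewrite vertex_face by lia; reflexivity).
    apply step_backward.
  - cbn [bl]; apply act_app; exists (root c); split.
    { apply act_root_faces; intros i Hi%in_rev%in_seq; lia. }
    rewrite <- edge01_map, <- lC_faces by (auto || lia).
    exists (vertex 1 c); split.
    { unfold root; rewrite <- (vertex_edge01 _ _ c 0), <- (vertex_edge01 _ _ c 1) by lia.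
      apply step_forward. }
    exists (vertex 1 c); split.
    { replace (vertex 1 c) with (root (face 0 c))
        by (unfold root; rewrite vertex_face by lia; reflexivity).
      apply step_root. }
    exists (root c); split; [|reflexivity].
    unfold root; rewrite <- (vertex_edge01 _ _ c 0), <- (vertex_edge01 _ _ c 1) by lia.
    apply step_backward.
Qed.

End CommutingFaces.

Section Immersion.

Hypothesis lC_imm : immersion C B lC.

Lemma act_cell_letter k (r : cell B (S (S k))) t u :
  act lC t [(gen r, false)] u <->
  u = t /\ exists c : cell C (S (S k)), lC _ c = r /\ root c = t.
Proof.
  split.
  - intros [s [[-> Hc]%step_cell_iff ->]]; auto.
  - intros [-> Hc]; exists t; split; [apply step_cell_iff; auto | reflexivity].
Qed.

Lemma act_wcong w z : wcong B w z -> forall t u, act lC t w u <-> act lC t z u.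
Proof.
  destruct lC_imm as [lC_faces lC_inj].
  induction 1 as [w|w z _ IH|w z y _ IH1 _ IH2|p w1 w2 q _ IH|w|w z|k r|k r];
    intros t u.
  - reflexivity.
  - symmetry; apply IH.
  - rewrite IH1; apply IH2.
  - rewrite !act_app; setoid_rewrite act_app; setoid_rewrite IH; reflexivity.
  - rewrite app_assoc, act_app; setoid_rewrite act_w_linv; [|exact lC_inj].
    split; [intros [m [[-> _] H]]; exact H | intros H; exists t; eauto].
  - rewrite app_assoc, (app_assoc z), !act_app; setoid_rewrite act_w_linv; try exact lC_inj.
    split; intros [m [[-> Hw] [-> Hz]]]; exists t; auto.
  - change [(gen r, false); (gen r, false)] with ([(gen r, false)] ++ [(gen r, false)]).
    rewrite act_app; setoid_rewrite act_cell_letter.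
    split; [intros [m [[-> Hc] [-> _]]] | intros [-> Hc]; exists t]; auto.
  - change ((gen r, false) :: bl r) with ([(gen r, false)] ++ bl r).
    rewrite act_app; setoid_rewrite act_cell_letter; split.
    + intros [-> [c [<- <-]]]; exists (root c); split; [eauto | apply act_boundary; exact lC_faces].
    + intros [m [[-> [c [<- <-]]] H]]; split; [|eauto].
      eapply act_functional; [exact lC_inj | exact H | apply act_boundary; exact lC_faces].
Qed.

Lemma idem_act_fixed e t u : idem e -> act lC t e u -> t = u.
Proof.
  destruct lC_imm as [_ lC_inj]; intros He H.
  assert (Hee : act lC t (e ++ e) u) by (apply (act_wcong _ _ He); exact H).
  apply act_app in Hee as [m [Hm Hu]].
  assert (m = u) as -> by (eapply act_functional; eauto).
  eapply act_injective; eauto.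
Qed.

Lemma loopset_upward_closed t m n :
  loopset C B lC t n -> mleq B n m -> loopset C B lC t m.
Proof.
  unfold loopset; intros Hn [e [He Hne]].
  apply (act_wcong _ _ Hne), act_app in Hn; destruct Hn as [u [Heu Hm]].
  rewrite <- (idem_act_fixed _ _ _ He Heu) in Hm; exact Hm.
Qed.

End Immersion.

End Action.

Lemma idem_w_linv (B : DeltaComplex) (w : list (Letter B)) : idem (w ++ linv w).
Proof.
  pose proof (wc_ctx B [] (w ++ linv w ++ w) w (linv w) (wc_vag1 B w)) as H.
  unfold idem; rewrite <- !app_assoc; rewrite <- !app_assoc in H; exact H.
Qed.

Section Maps.

Variables (B C D : DeltaComplex) (lC : cmap C B) (lD : cmap D B) (f : cmap C D).
Hypothesis f_faces : commutes_faces C D f.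
Hypothesis f_labels : forall k (c : cell C k), lD k (f k c) = lC k c.

Lemma step_map t a u : step lC t a u -> step lD (f 0 t) a (f 0 u).
Proof.
  destruct a as [[[|k] x] b].
  - intros [e [He Hb]]%step_edge_iff; exists (f 1 e); split; [congruence|].
    rewrite <- !vertex_map by exact f_faces; destruct b, Hb; split; congruence.
  - intros [-> [c [<- <-]]]%step_cell_iff; split; [reflexivity|].
    exists (f _ c); split; [apply f_labels | unfold root; symmetry; apply vertex_map, f_faces].
Qed.

Lemma act_map : forall w t u, act lC t w u -> act lD (f 0 t) w (f 0 u).
Proof.
  induction w as [|a w IH]; intros t u H; simpl in H.
  - subst; reflexivity.
  - destruct H as [s [Hs H]]; exists (f 0 s); split; [apply step_map | apply IH]; assumption.
Qed.

Section StarSurjective.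

Hypothesis f_star : star_surjective C D f.

Lemma step_lift t a s : step lD (f 0 t) a s -> exists u, step lC t a u /\ f 0 u = s.
Proof.
  destruct a as [[[|k] x] b].
  - intros [e [He Hb]]%step_edge_iff; destruct b, Hb as [H0 H1].
    + destruct (f_star 1 1 t e ltac:(lia) H1) as [c [Hc1 <-]].
      exists (vertex 0 c); split; [|rewrite (vertex_map _ _ _ f_faces); congruence].
      exists c; rewrite <- f_labels; auto.
    + destruct (f_star 1 0 t e ltac:(lia) H0) as [c [Hc0 <-]].
      exists (vertex 1 c); split; [|rewrite (vertex_map _ _ _ f_faces); congruence].
      exists c; rewrite <- f_labels; auto.
  - intros [-> [d [<- Hd]]]%step_cell_iff.
    destruct (f_star _ 0 t d ltac:(lia) Hd) as [c [Hc0 <-]].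
    exists t; split; [|reflexivity].
    split; [reflexivity | exists c; auto].
Qed.

Lemma act_lift : forall w t s, act lD (f 0 t) w s -> exists u, act lC t w u /\ f 0 u = s.
Proof.
  induction w as [|a w IH]; intros t s H; simpl in H.
  - subst; exists t; split; reflexivity.
  - destruct H as [s' [Hs H]].
    destruct (step_lift _ _ _ Hs) as [u' [Hu' <-]].
    destruct (IH _ _ H) as [u [Hu <-]]; exists u; split; [exists u'|]; auto.
Qed.

Lemma loopset_full (lC_imm : immersion C B lC) v e :
  idem e -> loopset D B lD (f 0 v) e -> loopset C B lC v e.
Proof.
  intros He HD; destruct (act_lift _ _ _ HD) as [u [Hu _]].
  unfold loopset; rewrite (idem_act_fixed _ _ _ lC_imm _ _ _ He Hu) at 2; exact Hu.
Qed.

End StarSurjective.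

Section Full.

Variable v : cell C 0.
Hypothesis C_connected : connected C.
Hypothesis lC_inj : locally_injective C B lC.
Hypothesis lD_inj : locally_injective D B lD.
Hypothesis f_inj : locally_injective C D f.
Hypothesis loops_full :
  forall e, idem e -> loopset D B lD (f 0 v) e -> loopset C B lC v e.

(* Prefix [w] with a path [p] from [v] to [t]; then [a a^-1] for [a := p w] is an idempotent
   loop at [f v], and lies in L(C, v) exactly when [a] can be read from [v]. *)
Lemma act_lift_of_full t w s : act lD (f 0 t) w s -> exists u, act lC t w u.
Proof.
  intros Hw; destruct (connected_act _ _ lC C_connected v t) as [p Hp].
  assert (Ha : act lD (f 0 v) (p ++ w) s) by (apply act_app; eauto using act_map).
  assert (Hloop : loopset C B lC v ((p ++ w) ++ linv (p ++ w))).
  { apply loops_full; [apply idem_w_linv|].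
    apply act_app; exists s; split; [|apply act_linv]; exact Ha. }
  apply act_w_linv in Hloop as [_ [u [m [Hm Hu]]%act_app]]; [|exact lC_inj].
  rewrite (act_functional _ _ _ lC_inj _ _ _ _ Hm Hp) in Hu; eauto.
Qed.

Lemma lift_root_corner t k (d : cell D (S k)) :
  vertex 0 d = f 0 t -> exists c, vertex 0 c = t /\ f _ c = d.
Proof.
  intros Hd; destruct (step_letter_exists _ _ lD _ d) as [s Hs]; rewrite Hd in Hs.
  destruct (act_lift_of_full t [(gen (lD _ d), false)] s) as [u [u' [Hu _]]].
  { exists s; split; [exact Hs | reflexivity]. }
  destruct (step_letter_cell _ _ _ _ _ _ _ Hu) as [c [Hc Hc0]].
  exists c; split; [exact Hc0|].
  apply (lD_inj _ 0); [lia | rewrite <- (vertex_map _ _ _ f_faces); congruence | congruence].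
Qed.

Lemma lift_edge_head t (d : cell D 1) :
  vertex 1 d = f 0 t -> exists c, vertex 1 c = t /\ f 1 c = d.
Proof.
  intros Hd; pose proof (step_backward _ _ lD d) as Hs; rewrite Hd in Hs.
  destruct (act_lift_of_full t [(gen (lD 1 d), true)] (vertex 0 d)) as [u [u' [Hu _]]].
  { exists (vertex 0 d); split; [exact Hs | reflexivity]. }
  apply step_edge_iff in Hu as [c [Hc [_ Hc1]]].
  exists c; split; [exact Hc1|].
  apply (lD_inj _ 1); [lia | rewrite <- (vertex_map _ _ _ f_faces); congruence | congruence].
Qed.

(* A corner at [v_i] is reached from [v_i] by walking back along the edge [v_0 v_i]
   and then lifting the corner at [v_0]. *)
Lemma star_surjective_of_full : star_surjective C D f.
Proof.
  intros k i t d Hi Hd; destruct k as [|k].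
  { exists t; split; [reflexivity | symmetry; exact Hd]. }
  destruct (Nat.eq_dec i 0) as [->|Hi0]; [apply lift_root_corner; exact Hd|].
  destruct (lift_edge_head t (edge0 D k i d)) as [e [He1 He]].
  { rewrite vertex1_edge0 by lia; exact Hd. }
  destruct (lift_root_corner (vertex 0 e) _ d) as [c [Hc0 Hc]].
  { rewrite (vertex_map _ _ _ f_faces), He; symmetry; apply vertex0_edge0. }
  assert (Hce : edge0 C k i c = e).
  { apply (f_inj 1 0); [lia | rewrite vertex0_edge0; exact Hc0 |].
    rewrite (edge0_map _ _ _ f_faces), Hc; exact (eq_sym He). }
  exists c; split; [|exact Hc].
  rewrite <- (vertex1_edge0 _ k i c), Hce by lia; exact He1.
Qed.

End Full.

End Maps.

Lemma surjective_of_star_surjective (C D : DeltaComplex) (f : cmap C D) (v : cell C 0) :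
  commutes_faces C D f -> star_surjective C D f -> connected D ->
  forall w : cell D 0, exists u, f 0 u = w.
Proof.
  intros f_faces f_star D_connected w.
  assert (Himage : forall x y, clos_refl_sym_trans _ (adj D) x y ->
            (exists a, f 0 a = x) <-> (exists a, f 0 a = y)).
  { intros x y H; induction H as [x y [e [H0 H1]]| | |]; [split| | |]; try tauto.
    - intros [a Ha]; destruct (f_star 1 0 a e ltac:(lia) ltac:(congruence)) as [c [_ Hc]].
      exists (vertex 1 c); rewrite (vertex_map _ _ _ f_faces); congruence.
    - intros [a Ha]; destruct (f_star 1 1 a e ltac:(lia) ltac:(congruence)) as [c [_ Hc]].
      exists (vertex 0 c); rewrite (vertex_map _ _ _ f_faces); congruence. }
  apply (Himage _ _ (D_connected (f 0 v) w)); eauto.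
Qed.

Theorem mainTheorem15 (B C D : DeltaComplex) (lC : cmap C B) (lD : cmap D B)
  (f : cmap C D) (v : cell C 0) :
  single_vertex B -> finite_dim B -> finite_dim C -> finite_dim D ->
  connected C -> connected D ->
  immersion C B lC -> immersion D B lD -> immersion C D f ->
  (forall k (c : cell C k), lD k (f k c) = lC k c) ->
  (covering C D f <->
   full_closed_inverse_submonoid B (loopset C B lC v) (loopset D B lD (f 0 v))).
Proof.
  intros _ _ _ _ C_connected D_connected lC_imm [_ lD_inj] [f_faces f_inj] f_labels.
  split.
  - intros [_ [f_star _]]; repeat split.
    + intros w; apply act_map; assumption.
    + intros w z Hw Hz; apply act_app; eauto.
    + intros w; apply act_linv.
    + intros m n; apply loopset_upward_closed, lC_imm.
    + intros e; apply loopset_full; assumption.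
  - intros [_ [_ [_ [_ [_ full]]]]].
    assert (f_star : star_surjective C D f)
      by exact (star_surjective_of_full B C D lC lD f f_faces f_labels v C_connected
                  (proj2 lC_imm) lD_inj f_inj full).
    split; [split; assumption|].
    split; [exact f_star|].
    exact (surjective_of_star_surjective C D f v f_faces f_star D_connected).
Qed.
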